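(* Let $n,p \in \mathbb{N}$, $S_1,\dots,S_p \in \mathbb{N}^n\setminus\{0\}$, $C = \frac{1}{2}\cdot 1_{n\times 1}$, $\rho > 0$, $R = \sqrt{\rho^2 + \frac{n}{4}}$ and $C_i = C - \rho\cdot\frac{S_i}{\|S_i\|}$ for $i \in \{1,\dots,p\}$. For $x \in \{0,1\}^n$: (a) if $x$ satisfies $-\frac{\epsilon}{2} \le \frac{S_i^T}{\|S_i\|}(x - C) \le \frac{\epsilon}{2}$ for all $i \in \{1,\dots,p\}$, then $x$ satisfies $-\frac{\delta}{2} \le \|x - C_i\| - R \le \frac{\delta}{2}$ for all $i$, with $\delta = 2\left(\frac{\epsilon}{2} + \frac{n}{8\rho}\right)$; (b) conversely, if $x$ satisfies $-\frac{\delta}{2} \le \|x - C_i\| - R \le \frac{\delta}{2}$ for all $i \in \{1,\dots,p\}$, then $x$ satisfies $-\frac{\epsilon}{2} \le \frac{S_i^T}{\|S_i\|}(x - C) \le \frac{\epsilon}{2}$ for all $i$, with $\epsilon = 2\left(\frac{\delta}{2} + \frac{n}{8\rho}\right)$.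
   Context: $1_{n\times 1}$ denotes the all-ones vector in $\mathbb{R}^n$ and $\|\cdot\|$ the Euclidean norm. *)

From HB Require Import structures.
From mathcomp Require Import all_boot all_order all_algebra.
Set Implicit Arguments. Unset Strict Implicit. Unset Printing Implicit Defensive.
Import Order.TTheory GRing.Theory Num.Theory.
Local Open Scope ring_scope.

Definition dotv (R : rcfType) (n : nat) (u v : 'I_n -> R) : R :=
  \sum_(j < n) u j * v j.
Definition enorm (R : rcfType) (n : nat) (v : 'I_n -> R) : R :=
  Num.sqrt (\sum_(j < n) v j ^+ 2).

(* Write y := x - C, whose entries are +-1/2, u := S_i / |S_i| and t := u . y.
   Then a := |x - C_i| = |y + rho u| satisfies a^2 = R^2 + 2 rho t, and
   t^2 <= |y|^2 = n/4 by Cauchy-Schwarz.  Hence (a - R) (a + R) = 2 rho t where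
   a + R lies between 2 rho + t and 2 rho + 2 k, with k := n / (8 rho) chosen so
   that 2 rho k = n/4; this gives |a - R| <= |t| + k and |t| <= |a - R| + k. *)

From HB Require Import structures.
From mathcomp Require Import all_boot all_order all_algebra.
From mathcomp Require Import ring lra.
Import Order.TTheory GRing.Theory Num.Theory.
Local Open Scope ring_scope.

Section EuclideanNorm.

Context {R : rcfType} {n : nat}.
Implicit Types (u v : 'I_n -> R) (c : R).

Lemma dotvC u v : dotv u v = dotv v u.
Proof. by apply: eq_bigr => j _; rewrite mulrC. Qed.

Lemma dotv_ge0 v : 0 <= dotv v v.
Proof. by apply: sumr_ge0 => j _; rewrite -expr2 sqr_ge0. Qed.

Lemma enorm_ge0 v : 0 <= enorm v.
Proof. exact: sqrtr_ge0. Qed.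

Lemma eq_enorm u v : u =1 v -> enorm u = enorm v.
Proof. by move=> eq_uv; rewrite /enorm; under eq_bigr do rewrite eq_uv. Qed.

Lemma sqr_enorm v : enorm v ^+ 2 = dotv v v.
Proof.
by rewrite /enorm sqr_sqrtr; under eq_bigr do rewrite expr2; [|exact: dotv_ge0].
Qed.

Lemma enorm_gt0 v : (exists j, v j != 0) -> 0 < enorm v.
Proof.
move=> [j vj_neq0]; rewrite sqrtr_gt0 (bigD1 j) //=.
have : 0 <= \sum_(k < n | k != j) v k ^+ 2 by apply: sumr_ge0 => k _; exact: sqr_ge0.
have : 0 < v j ^+ 2 by rewrite exprn_even_gt0 // vj_neq0.
lra.
Qed.

Lemma sqr_enorm_const v c : (forall j, v j ^+ 2 = c) -> enorm v ^+ 2 = n%:R * c.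
Proof.
move=> v_sqr; rewrite /enorm sqr_sqrtr.
  by rewrite (eq_bigr _ (fun j _ => v_sqr j)) sumr_const card_ord mulr_natl.
by apply: sumr_ge0 => j _; exact: sqr_ge0.
Qed.

Lemma sqr_enormDZ u v c :
  enorm (fun j => u j + c * v j) ^+ 2
  = enorm u ^+ 2 + 2 * c * dotv u v + c ^+ 2 * enorm v ^+ 2.
Proof.
rewrite !sqr_enorm /dotv !mulr_sumr -!big_split; apply: eq_bigr => j _ /=; ring.
Qed.

Lemma dotv_sqr_le u v : dotv u v ^+ 2 <= enorm u ^+ 2 * enorm v ^+ 2.
Proof.
have [v0 | v_neq0] := eqVneq (enorm v) 0.
  have v_eq0 j : v j = 0.
    have vv_eq0 : dotv v v = 0 by rewrite -sqr_enorm v0 expr0n.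
    apply/eqP; rewrite -sqrf_eq0 expr2; apply/eqP.
    by apply: (psumr_eq0P _ vv_eq0) => // k _; rewrite -expr2 sqr_ge0.
  have -> : dotv u v = 0 by rewrite /dotv big1 // => j _; rewrite v_eq0 mulr0.
  by rewrite expr0n mulr_ge0 ?sqr_ge0.
set d := dotv u v; set N := enorm v ^+ 2.
have N_gt0 : 0 < N by rewrite exprn_gt0 // lt_def v_neq0 sqrtr_ge0.
have := sqr_ge0 (enorm (fun j => u j + (- d / N) * v j)).
rewrite sqr_enormDZ -/d -/N.
have -> : enorm u ^+ 2 + 2 * (- d / N) * d + (- d / N) ^+ 2 * N
          = (enorm u ^+ 2 * N - d ^+ 2) / N by field; rewrite gt_eqF.
by rewrite ler_pdivlMr // mul0r subr_ge0.
Qed.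

Lemma sqr_enorm_shift_dir (s y : 'I_n -> R) rho : 0 < enorm s ->
  enorm (fun j => y j + rho * (s j / enorm s)) ^+ 2
  = rho ^+ 2 + enorm y ^+ 2 + 2 * rho * (dotv s y / enorm s).
Proof.
move=> s_gt0; rewrite (@eq_enorm _ (fun j => y j + rho / enorm s * s j)).
  by rewrite sqr_enormDZ dotvC; field; rewrite gt_eqF.
by move=> j /=; rewrite mulrA mulrAC.
Qed.

Lemma dir_dotv_sqr_le (s y : 'I_n -> R) : 0 < enorm s ->
  (dotv s y / enorm s) ^+ 2 <= enorm y ^+ 2.
Proof.
by move=> s_gt0; rewrite expr_div_n ler_pdivrMr ?exprn_gt0 // dotvC dotv_sqr_le.
Qed.

End EuclideanNorm.

Section ShellSlabGap.

Context {R : rcfType} {rho m k r t a : R}.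
Hypotheses (rho_gt0 : 0 < rho) (r_ge0 : 0 <= r) (a_ge0 : 0 <= a).
Hypotheses (r_sqr : r ^+ 2 = rho ^+ 2 + m) (a_sqr : a ^+ 2 = r ^+ 2 + 2 * rho * t).
Hypotheses (t_sqr_le : t ^+ 2 <= m) (k_def : 2 * rho * k = m).

Let m_ge0 : 0 <= m. Proof. exact: le_trans (sqr_ge0 t) t_sqr_le. Qed.

(* [lra] and [nra] do not see section hypotheses, hence the explicit [move:]. *)
Let k_ge0 : 0 <= k. Proof. move: rho_gt0 m_ge0 k_def => *; nra. Qed.

Lemma rho_le_rad : rho <= r.
Proof. move: rho_gt0 r_ge0 m_ge0 r_sqr => *; nra. Qed.

Lemma rad_le_rho_add : r <= rho + k.
Proof. move: rho_gt0 k_ge0 r_sqr k_def => *; nra. Qed.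

Lemma rho_add_le_shell : rho + t <= a.
Proof. move: a_ge0 r_sqr a_sqr t_sqr_le => *; nra. Qed.

Lemma shell_gap_ge : t - k <= a - r.
Proof. have := rad_le_rho_add; have := rho_add_le_shell; lra. Qed.

Lemma shell_gap_le : 0 <= t -> a - r <= t.
Proof. move: rho_le_rad rho_add_le_shell r_ge0 a_sqr => *; nra. Qed.

Lemma shell_le_rad : t <= 0 -> a <= r.
Proof. move: rho_gt0 r_ge0 a_ge0 a_sqr => *; nra. Qed.

Lemma slab_coord_ge (d : R) : 0 <= d -> - d <= a - r -> - (d + k) <= t.
Proof.
move=> d_ge0 gap_ge; move: rho_gt0 rho_le_rad r_sqr a_sqr t_sqr_le k_def => *.
have [d_le_r | r_lt_d] := lerP d r; last by nra.
have : (r - d) ^+ 2 <= a ^+ 2 by rewrite ler_sqr ?nnegrE; lra.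
(* [d ^+ 2 - 2 * (r - rho) * d + m] has discriminant [(r - rho) ^+ 2 - m <= 0]. *)
have : (r - rho) ^+ 2 <= m by nra.
have := sqr_ge0 (d - (r - rho)); nra.
Qed.

Lemma shell_gap_norm_le (e : R) : `|t| <= e -> `|a - r| <= e + k.
Proof.
rewrite !ler_norml => /andP[t_ge t_le]; apply/andP; split.
  by have := shell_gap_ge; lra.
suff : a - r <= e by have := k_ge0; lra.
have [t_ge0 | t_le0] := lerP 0 t.
  by have := shell_gap_le t_ge0; lra.
by have := shell_le_rad (ltW t_le0); lra.
Qed.

Lemma slab_coord_norm_le (d : R) : `|a - r| <= d -> `|t| <= d + k.
Proof.
rewrite !ler_norml => /andP[gap_ge gap_le]; apply/andP; split.
  by apply: slab_coord_ge => //; lra.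
by have := shell_gap_ge; lra.
Qed.

End ShellSlabGap.

Theorem lemma4p1 (R : rcfType) (n p : nat) (S : 'I_p -> 'I_n -> nat)
    (hS : forall i : 'I_p, exists j : 'I_n, S i j != 0%N)
    (rho : R) (hrho : 0 < rho) (x : 'I_n -> bool) :
  let xr : 'I_n -> R := fun j => (x j)%:R in
  let C : 'I_n -> R := fun _ => 1 / 2 in
  let Rad : R := Num.sqrt (rho ^+ 2 + n%:R / 4) in
  let Sr (i : 'I_p) : 'I_n -> R := fun j => (S i j)%:R in
  let Ci (i : 'I_p) : 'I_n -> R := fun j => C j - rho * (Sr i j / enorm (Sr i)) in
  let xmC : 'I_n -> R := fun j => xr j - C j in
  (forall eps : R,
     (forall i : 'I_p,
        - (eps / 2) <= dotv (Sr i) xmC / enorm (Sr i) <= eps / 2) ->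
     let delta := 2 * (eps / 2 + n%:R / (8 * rho)) in
     forall i : 'I_p,
       - (delta / 2) <= enorm (fun j => xr j - Ci i j) - Rad <= delta / 2)
  /\
  (forall delta : R,
     (forall i : 'I_p,
        - (delta / 2) <= enorm (fun j => xr j - Ci i j) - Rad <= delta / 2) ->
     let eps := 2 * (delta / 2 + n%:R / (8 * rho)) in
     forall i : 'I_p,
       - (eps / 2) <= dotv (Sr i) xmC / enorm (Sr i) <= eps / 2).
Proof.
move=> xr C Rad Sr Ci xmC.
have Sr_gt0 i : 0 < enorm (Sr i).
  by have [j Sij] := hS i; apply: enorm_gt0; exists j; rewrite pnatr_eq0.
have xmC_sqr : enorm xmC ^+ 2 = n%:R / 4.
  rewrite (sqr_enorm_const _ (1 / 4)) ?div1r // => j.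
  by rewrite /xmC /xr /C; case: (x j); rewrite /= ?mulr1n ?mulr0n; field.
have Rad_sqr : Rad ^+ 2 = rho ^+ 2 + n%:R / 4.
  by rewrite sqr_sqrtr // addr_ge0 ?sqr_ge0 // divr_ge0 ?ler0n.
have k_def : 2 * rho * (n%:R / (8 * rho)) = n%:R / 4 by field; rewrite gt_eqF.
have shell_eq i : enorm (fun j => xr j - Ci i j)
                = enorm (fun j => xmC j + rho * (Sr i j / enorm (Sr i))).
  by apply: eq_enorm => j; rewrite /xmC /Ci /=; ring.
have a_sqr i : enorm (fun j => xmC j + rho * (Sr i j / enorm (Sr i))) ^+ 2
               = Rad ^+ 2 + 2 * rho * (dotv (Sr i) xmC / enorm (Sr i)).
  by rewrite sqr_enorm_shift_dir ?Sr_gt0 // xmC_sqr Rad_sqr.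
have t_sqr_le i : (dotv (Sr i) xmC / enorm (Sr i)) ^+ 2 <= n%:R / 4.
  by rewrite -xmC_sqr dir_dotv_sqr_le ?Sr_gt0.
have half2 (X : R) : 2 * X / 2 = X by rewrite mulrC mulKf ?pnatr_eq0.
have Rad_ge0 : 0 <= Rad by exact: sqrtr_ge0.
split=> [eps eps_slab delta i | delta delta_shell eps i].
  rewrite /delta half2 -ler_norml shell_eq.
  apply: (shell_gap_norm_le hrho Rad_ge0 (enorm_ge0 _) Rad_sqr (a_sqr i)
            (t_sqr_le i) k_def).
  by rewrite ler_norml eps_slab.
rewrite /eps half2 -ler_norml.
apply: (slab_coord_norm_le hrho Rad_ge0 (enorm_ge0 _) Rad_sqr (a_sqr i)
          (t_sqr_le i) k_def).
by rewrite ler_norml -shell_eq delta_shell.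
Qed.
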